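(* For every integer $k\ge1$, the $2\times2$ absorbing game \[ \begin{bmatrix}0;\,(\tfrac1k,k^* ) & 1^*\\ 1^* & k^*\end{bmatrix}, \] i.e. with $g_{11}=0$, $q_{11}=1/k$, $w_{11}=k$; $g_{12}=w_{12}=1$, $q_{12}=1$; $g_{21}=w_{21}=1$, $q_{21}=1$; $g_{22}=w_{22}=k$, $q_{22}=1$, has limit value $v=\lim_{\lambda\to0}v_\lambda=\sqrt k$. *)

From HB Require Import structures.
From mathcomp Require Import all_boot all_order all_algebra.
From mathcomp Require Import all_classical all_reals all_analysis.
Set Implicit Arguments. Unset Strict Implicit. Unset Printing Implicit Defensive.
Import Order.TTheory GRing.Theory Num.Theory.
Local Open Scope ring_scope.
Local Open Scope classical_set_scope.

Section AbsorbingGames.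
Variable R : realType.

Definition mixed (I : finType) : set (I -> R) :=
  [set x | (forall i, 0 <= x i) /\ \sum_(i : I) x i = 1].

Definition pay (I J : finType) (A : I -> J -> R) (x : I -> R) (y : J -> R) : R :=
  \sum_(i : I) \sum_(j : J) x i * y j * A i j.

(* value of the zero-sum matrix game A (row player maximizes), defined as
   the max-min over mixed strategies (equal to the min-max by von Neumann) *)
Definition mat_val (I J : finType) (A : I -> J -> R) : R :=
  sup [set inf [set pay A x y | y in @mixed J] | x in @mixed I].

(* Shapley operator of the lambda-discounted absorbing game with
   non-absorbing stage payoff g, absorption probability q, absorbing payoff w:
   v |-> val [ lambda g + (1 - lambda) (q w + (1 - q) v) ]. *)
Definition shapley_op (I J : finType) (g q w : I -> J -> R) (l v : R) : R :=
  mat_val (fun i j => l * g i j + (1 - l) * (q i j * w i j + (1 - q i j) * v)).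

(* v is the lambda-discounted value (Shapley's fixed point characterization) *)
Definition is_disc_value (I J : finType) (g q w : I -> J -> R) (l v : R) : Prop :=
  v = shapley_op g q w l v.

Definition ex_g (k : nat) (i j : 'I_2) : R :=
  if (i == 0%N :> nat) && (j == 0%N :> nat) then 0
  else if (i == 1%N :> nat) && (j == 1%N :> nat) then k%:R else 1.
Definition ex_q (k : nat) (i j : 'I_2) : R :=
  if (i == 0%N :> nat) && (j == 0%N :> nat) then k%:R^-1 else 1.
Definition ex_w (k : nat) (i j : 'I_2) : R :=
  if (i == 0%N :> nat) && (j == 0%N :> nat) then k%:R
  else if (i == 1%N :> nat) && (j == 1%N :> nat) then k%:R else 1.

End AbsorbingGames.

From HB Require Import structures.
From mathcomp Require Import all_boot all_order all_algebra.
From mathcomp Require Import all_classical all_reals all_analysis.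
From mathcomp Require Import ring lra.
Import Order.TTheory GRing.Theory Num.Theory.
Local Open Scope ring_scope.
Local Open Scope classical_set_scope.

(* With a := (1 - l) (1 + (1 - 1/k) v), the Shapley operator of the game maps v
   to the value of the matrix game [[a, 1], [1, k]], which is 1 for a <= 1 and
   1 + (a-1)(k-1)/((a-1)+(k-1)) otherwise: a 1-Lipschitz function of a.  So the
   operator is a (1 - l)(1 - 1/k)-contraction with a unique fixed point v_l, and
   dropping the discount moves it by at most l |1 + (1 - 1/k) v|.  As sqrt k is
   a fixed point of the undiscounted operator, the contraction estimate gives
   |v_l - sqrt k| <= k (1 + (1 - 1/k) sqrt k) l. *)

Section MatrixGame.
Context {R : realType}.

Lemma mixed_le1 {I : finType} {x : I -> R} i : mixed x -> x i <= 1.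
Proof. by case=> x_ge0 <-; rewrite (bigD1 i) //= lerDl sumr_ge0. Qed.

Lemma pay_ge (I J : finType) (A : I -> J -> R) x y : mixed x -> mixed y ->
  - \sum_i \sum_j `|A i j| <= pay A x y.
Proof.
move=> mx my; rewrite /pay -sumrN; apply: ler_sum => i _.
rewrite -sumrN; apply: ler_sum => j _; apply: lerNnormlW.
have [x_ge0 y_ge0] : 0 <= x i /\ 0 <= y j by split; [exact: mx.1 | exact: my.1].
have xy_le1 : `|x i * y j| <= 1.
  by rewrite ger0_norm ?mulr_ge0 ?mulr_ile1 ?(mixed_le1 i mx) ?(mixed_le1 j my).
by rewrite normrM ler_piMl.
Qed.

Lemma mat_val_saddle (I J : finType) (A : I -> J -> R) xs ys V :
  mixed xs -> mixed ys ->
  (forall y, mixed y -> V <= pay A xs y) ->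
  (forall x, mixed x -> pay A x ys <= V) -> mat_val A = V.
Proof.
move=> mxs mys xs_guarantees ys_guarantees.
have inf_le x : mixed x -> inf [set pay A x y | y in @mixed R J] <= V.
  move=> mx; apply: le_trans (ys_guarantees x mx); apply: ge_inf; last by exists ys.
  by exists (- \sum_i \sum_j `|A i j|) => _ [y my <-]; exact: pay_ge.
have inf_xs : inf [set pay A xs y | y in @mixed R J] = V.
  apply/eqP; rewrite eq_le inf_le //=; apply: lb_le_inf; first by exists (pay A xs ys), ys.
  by move=> _ [y my <-]; exact: xs_guarantees.
apply/eqP; rewrite eq_le; apply/andP; split.
  by apply: ge_sup; [exists V, xs | move=> _ [x mx <-]; exact: inf_le].
apply: sup_upper_bound; last by exists xs.
by split; [exists V, xs | exists V => _ [x mx <-]; exact: inf_le].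
Qed.

End MatrixGame.

Section TwoByTwo.
Context {R : realType}.

Lemma sum_ord2 (f : 'I_2 -> R) : \sum_i f i = f ord0 + f ord_max.
Proof. by rewrite !big_ord_recl big_ord0 addr0; congr (_ + f _); apply: val_inj. Qed.

Lemma pay2E (A : 'I_2 -> 'I_2 -> R) x y : pay A x y =
  x ord0 * y ord0 * A ord0 ord0 + x ord0 * y ord_max * A ord0 ord_max
  + x ord_max * y ord0 * A ord_max ord0 + x ord_max * y ord_max * A ord_max ord_max.
Proof. by rewrite /pay !sum_ord2 addrA. Qed.

Lemma mixed2P (x : 'I_2 -> R) : mixed x ->
  [/\ 0 <= x ord0, 0 <= x ord_max & x ord0 + x ord_max = 1].
Proof. by case=> x_ge0; rewrite sum_ord2. Qed.

Definition strat2 (p : R) : 'I_2 -> R := fun i => if i == ord0 then p else 1 - p.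

Lemma mixed_strat2 (p : R) : 0 <= p <= 1 -> mixed (strat2 p).
Proof.
move=> /andP[p_ge0 p_le1]; split; last by rewrite sum_ord2 /strat2 /=; ring.
by move=> i; rewrite /strat2; case: ifP; rewrite ?subr_ge0.
Qed.

Definition parallel (s t : R) : R := s * t / (s + t).

Lemma parallel0s (t : R) : parallel 0 t = 0.
Proof. by rewrite /parallel !mul0r. Qed.

Lemma parallel_lipschitz (s s' t : R) : 0 <= s -> 0 <= s' -> 0 <= t ->
  `|parallel s t - parallel s' t| <= `|s - s'|.
Proof.
move=> s_ge0 s'_ge0; rewrite le0r => /predU1P[->|t_gt0].
  by rewrite /parallel !mulr0 !mul0r subrr normr0.
have [st_gt0 s't_gt0] : 0 < s + t /\ 0 < s' + t by split; lra.
have -> : parallel s t - parallel s' t = (s - s') * (t ^+ 2 / ((s + t) * (s' + t))).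
  by rewrite /parallel; field; rewrite !gt_eqF.
rewrite normrM ler_piMr // ger0_norm; last by rewrite divr_ge0 ?sqr_ge0 // mulr_ge0 // ltW.
by rewrite ler_pdivrMr ?mulr_gt0 // mul1r expr2 ler_pM ?(ltW t_gt0) //; lra.
Qed.

(* For a <= 1 this relies on parallel 0 t = 0, including t = 0 where x / 0 = 0. *)
Definition val2 (b a : R) : R := 1 + parallel (Num.max (a - 1) 0) (b - 1).

Lemma mat_val2 (b a : R) (A : 'I_2 -> 'I_2 -> R) : 1 <= b ->
  A ord0 ord0 = a -> A ord0 ord_max = 1 -> A ord_max ord0 = 1 -> A ord_max ord_max = b ->
  mat_val A = val2 b a.
Proof.
move=> b_ge1 A00 A01 A10 A11; rewrite /val2; case: leP => [a_le1 | a_gt1].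
  rewrite parallel0s addr0.
  apply: (@mat_val_saddle _ _ _ A (strat2 0) (strat2 1));
    try by apply: mixed_strat2; rewrite lexx ler01.
  - move=> y /mixed2P[y0_ge0 y1_ge0 y_sum]; rewrite pay2E A00 A01 A10 A11 /strat2 /=.
    have : y ord_max <= y ord_max * b by rewrite ler_peMr.
    lra.
  - move=> x /mixed2P[x0_ge0 x1_ge0 x_sum]; rewrite pay2E A00 A01 A10 A11 /strat2 /=.
    have : x ord0 * a <= x ord0 by rewrite ler_piMr //; lra.
    lra.
(* No pure saddle point: both players mix with the weight p that equalizes
   the payoffs of the opponent's two actions. *)
set s := a - 1; set t := b - 1; set V := 1 + parallel s t.
have st_gt0 : 0 < s + t by rewrite /s /t; lra.
pose p := t / (s + t).
have p01 : 0 <= p <= 1.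
  rewrite /p divr_ge0 ?ler_pdivrMr // ?mul1r /t /s; lra.
have row_eq : p * a + (1 - p) = V by rewrite /V /parallel /p /s; field; rewrite gt_eqF.
have col_eq : p + (1 - p) * b = V by rewrite /V /parallel /p /s /t; field; rewrite gt_eqF.
have pay_p_y y : mixed y -> pay A (strat2 p) y = V.
  case/mixed2P=> _ _ y_sum; rewrite pay2E A00 A01 A10 A11 /strat2 /=.
  transitivity (y ord0 * (p * a + (1 - p)) + y ord_max * (p + (1 - p) * b)); first by ring.
  by rewrite row_eq col_eq -mulrDl y_sum mul1r.
have pay_x_p x : mixed x -> pay A x (strat2 p) = V.
  case/mixed2P=> _ _ x_sum; rewrite pay2E A00 A01 A10 A11 /strat2 /=.
  transitivity (x ord0 * (p * a + (1 - p)) + x ord_max * (p + (1 - p) * b)); first by ring.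
  by rewrite row_eq col_eq -mulrDl x_sum mul1r.
apply: (@mat_val_saddle _ _ _ A (strat2 p) (strat2 p)); try exact: mixed_strat2.
- by move=> y /pay_p_y ->.
- by move=> x /pay_x_p ->.
Qed.

Lemma val2_lipschitz (b a a' : R) : 1 <= b -> `|val2 b a - val2 b a'| <= `|a - a'|.
Proof.
move=> b_ge1; rewrite /val2 opprD addrACA subrr add0r.
apply: le_trans; first apply: parallel_lipschitz; rewrite ?le_max ?lexx ?orbT ?subr_ge0 //.
have [aa'_le a'a_le] : a - a' <= `|a - a'| /\ a' - a <= `|a - a'|.
  by rewrite ler_norm distrC ler_norm.
by rewrite ler_norml; case: (leP (a - 1) 0) => ?; case: (leP (a' - 1) 0) => ?; lra.
Qed.

Lemma val2_sqrt (b : R) : 1 <= b -> val2 b (1 + (1 - b^-1) * Num.sqrt b) = Num.sqrt b.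
Proof.
move=> b_ge1; set r := Num.sqrt b.
have b_eq : b = r ^+ 2 by rewrite sqr_sqrtr //; lra.
have r_ge1 : 1 <= r by rewrite -sqrtr1 ler_sqrt //; lra.
rewrite /val2 addrAC subrr add0r max_l; last first.
  by rewrite mulr_ge0 ?subr_ge0 ?invf_le1 //; lra.
have [r1 | r_neq1] := eqVneq r 1.
  by rewrite b_eq r1 expr1n invr1 subrr mul0r parallel0s addr0.
have r_gt1 : 1 < r by rewrite lt_neqAle eq_sym r_neq1.
by rewrite b_eq /parallel; field; rewrite !gt_eqF //; nra.
Qed.

End TwoByTwo.

Section FixedPoint.
Context {R : realType}.

Lemma lipschitz_fixed_point_dist (X : normedModType R) (f : X -> X) (q : R) v r :
  (forall u w, `|f u - f w| <= q * `|u - w|) -> v = f v ->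
  (1 - q) * `|v - r| <= `|f r - r|.
Proof.
move=> f_lip fv; have := f_lip v r; have := ler_distD (f r) (f v) r.
by rewrite -fv; lra.
Qed.

Lemma contraction_unique_fixed_point (X : completeNormedModType R) (f : X -> X) (q : R) :
  0 <= q < 1 -> (forall u w, `|f u - f w| <= q * `|u - w|) -> exists! x, x = f x.
Proof.
move=> /andP[q_ge0 q_lt1] f_lip.
have f_contr : is_contraction (totalfun f).
  by exists (NngNum q_ge0); split=> // -[u w] _; exact: f_lip.
have [x _ fx] := banach_fixed_point f_contr closedT (ex_intro _ 0 I).
exists x; split=> // y fy; exact: contraction_fixpoint_unique f_contr _ _ fx fy.
Qed.

End FixedPoint.

(* The cast to [R^o] only guides the inference of the target filter. *)
Lemma cvg_at_right0_of_dist_le (R : realType) (f : R -> R) (a C : R) :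
  (forall x, 0 < x <= 1 -> `|f x - a| <= C * x) -> f x @[x --> 0^'+] --> (a : R^o).
Proof.
move=> f_dist; apply/cvgrPdist_le => e e_gt0.
have C1_gt0 : 0 < `|C| + 1 by rewrite ltr_pwDr.
have d_gt0 : 0 < Num.min 1 (e / (`|C| + 1)) by rewrite lt_min ltr01 divr_gt0.
near=> x.
have x_gt0 : 0 < x by near: x; exact: nbhs_right_gt.
have : x <= Num.min 1 (e / (`|C| + 1)) by near: x; exact: nbhs_right_le.
rewrite le_min ler_pdivlMr // => /andP[x_le1 x_le_e].
rewrite distrC; apply: le_trans (f_dist x _) _; first by rewrite x_gt0.
have := ler_norm C; nra.
Unshelve. all: end_near.
Qed.

Section Example.
Variables (R : realType) (k : nat).
Hypothesis k_gt0 : (0 < k)%N.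

Let c : R := 1 - k%:R^-1.
Let r : R := Num.sqrt k%:R.

Let k_ge1 : 1 <= k%:R :> R. Proof. by rewrite ler1n. Qed.
Let c_ge0 : 0 <= c. Proof. by rewrite subr_ge0 invf_le1 ?ltr0n. Qed.
Let kc : k%:R * (1 - c) = 1. Proof. by rewrite /c opprB addrC subrK mulfV // pnatr_eq0 -lt0n. Qed.

Definition ex_shapley (l v : R) : R := val2 k%:R ((1 - l) * (1 + c * v)).

(* Off the top-left cell the stage payoff equals the absorbing payoff, so
   those entries of the Shapley matrix do not depend on l or v. *)
Lemma shapley_op_exE (l v : R) :
  shapley_op (ex_g R k) (ex_q R k) (ex_w R k) l v = ex_shapley l v.
Proof.
apply: mat_val2; rewrite // /ex_g /ex_q /ex_w /= /c; try ring.
by rewrite mulVf ?pnatr_eq0 -?lt0n //; ring.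
Qed.

Lemma ex_shapley_lipschitz (l u w : R) : l <= 1 ->
  `|ex_shapley l u - ex_shapley l w| <= (1 - l) * c * `|u - w|.
Proof.
move=> l_le1; apply: le_trans; first exact: val2_lipschitz.
have -> : (1 - l) * (1 + c * u) - (1 - l) * (1 + c * w) = (1 - l) * c * (u - w) by ring.
by rewrite !normrM (ger0_norm c_ge0) ger0_norm ?subr_ge0.
Qed.

Lemma ex_shapley_dist_l0 (l v : R) : 0 <= l ->
  `|ex_shapley l v - ex_shapley 0 v| <= l * `|1 + c * v|.
Proof.
move=> l_ge0; apply: le_trans; first exact: val2_lipschitz.
have -> : (1 - l) * (1 + c * v) - (1 - 0) * (1 + c * v) = - l * (1 + c * v) by ring.
by rewrite normrM normrN (ger0_norm l_ge0).
Qed.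

Lemma ex_shapley0_sqrt : ex_shapley 0 r = r.
Proof. by rewrite /ex_shapley subr0 mul1r val2_sqrt. Qed.

Lemma ex_shapley_unique_fixed_point (l : R) :
  0 < l <= 1 -> exists! v, v = ex_shapley l v.
Proof.
move=> /andP[l_gt0 l_le1]; apply: (@contraction_unique_fixed_point _ _ _ ((1 - l) * c)).
  have c_lt1 : c < 1 by rewrite /c gtrBl invr_gt0 ltr0n.
  have lc_ge0 : 0 <= l * c by rewrite mulr_ge0 // ltW.
  by rewrite mulr_ge0 ?c_ge0 ?subr_ge0 //=; lra.
by move=> u w; exact: ex_shapley_lipschitz.
Qed.

Lemma ex_fixed_point_dist_sqrt (l v : R) : 0 < l <= 1 -> v = ex_shapley l v ->
  `|v - r| <= k%:R * `|1 + c * r| * l.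
Proof.
move=> /andP[l_gt0 l_le1] fv.
have dist0 := ex_shapley_dist_l0 l r (ltW l_gt0); rewrite ex_shapley0_sqrt in dist0.
have fixed_dist := le_trans (@lipschitz_fixed_point_dist _ _ _ _ v r
  (fun u w => ex_shapley_lipschitz l u w l_le1) fv) dist0.
have lc_ge0 : 0 <= l * c by rewrite mulr_ge0 // ltW.
have dist_le : (1 - c) * `|v - r| <= l * `|1 + c * r|.
  by apply: le_trans fixed_dist; rewrite ler_wpM2r //; lra.
by rewrite -[`|v - r|]mul1r -{1}kc -!mulrA ler_wpM2l // (mulrC _ l).
Qed.

End Example.

Theorem theorem3 (R : realType) (k : nat) (hk : (1 <= k)%N) :
  (forall l : R, 0 < l <= 1 ->
     exists! v : R, is_disc_value (ex_g R k) (ex_q R k) (ex_w R k) l v) /\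
  (forall vl : R -> R,
     (forall l : R, 0 < l <= 1 ->
        is_disc_value (ex_g R k) (ex_q R k) (ex_w R k) l (vl l)) ->
     vl x @[x --> 0^'+] --> Num.sqrt (k%:R : R)).
Proof.
have disc_fixed l v :
    is_disc_value (ex_g R k) (ex_q R k) (ex_w R k) l v <-> v = ex_shapley R k l v.
  by rewrite /is_disc_value shapley_op_exE.
split=> [l l01 | vl vl_disc].
  have [v [fv v_uniq]] := ex_shapley_unique_fixed_point R k hk l l01.
  by exists v; split=> [|u /disc_fixed]; [exact/disc_fixed | exact: v_uniq].
apply: cvg_at_right0_of_dist_le => l l01.
exact/(ex_fixed_point_dist_sqrt R k hk l _ l01)/disc_fixed/vl_disc.
Qed.
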